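(* Let $G$ be a finite group with $\mathcal{D}(G)-\mathcal{D}(Z(G))=3$ and $\mathcal{D}(G/Z(G))=1$. Then $G=KH$ where $K\trianglelefteq G$ has prime order $p$, $H$ is a cyclic subgroup of order $q^2$ for a prime $q$ dividing $p-1$, $K\cap H=1$, and $C_H(K)=Z(G)$ has order $q$.
   Context: $\mathcal{D}(X)$ denotes the number of conjugacy classes of nontrivial subgroups $Y$ of the finite group $X$ with $N_X(Y)\neq Y$. $Z(G)$ is the center of $G$. *)

From mathcomp Require Import all_boot all_fingroup all_solvable.
Set Implicit Arguments.
Unset Strict Implicit.
Unset Printing Implicit Defensive.
Local Open Scope group_scope.

Definition nsn_subgroups (gT : finGroupType) (X : {set gT}) : {set {set gT}} :=
  [set Y : {set gT} | [&& group_set Y, Y \subset X, Y != 1 & 'N_X(Y) != Y]].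

Definition calD (gT : finGroupType) (X : {set gT}) : nat :=
  #|[set Y :^: X | Y in nsn_subgroups X]|.

From mathcomp Require Import all_boot all_fingroup all_solvable.
(* The classes counted by calD G are those of the subgroups of 'Z(G) (counted
   by calD 'Z(G)), the class of 'Z(G), the classes of non-self-normalizing
   overgroups of 'Z(G), which form a single class because calD (G / 'Z(G)) = 1,
   and the classes of the nontrivial subgroups incomparable with 'Z(G), which
   are never self-normalizing.  The hypothesis calD G = calD 'Z(G) + 3 thus
   makes all subgroups incomparable with 'Z(G) conjugate.  Since G / 'Z(G) is
   neither cyclic nor a p-group, this yields primes p <> q, a p-element y with
   <[y]> incomparable with 'Z(G) and a q-element w with 'Z(G) < <[w]>.  Then
   K = <[y]> has order p and is a Sylow subgroup, 'Z(G) has order q, the only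
   primes dividing #|G| are p and q, and every nontrivial subgroup of a Sylow
   q-subgroup Q contains 'Z(G).  Comparing the orders of non-self-normalizing
   overgroups of 'Z(G) gives #|Q| = q ^ 2; a Frobenius counting argument in
   G / 'Z(G) and coprime action of K on the abelian group Q give K <| G, and
   Q / 'C_Q(K) embeds in Aut K, so q divides p - 1. *)

Set Implicit Arguments.
Unset Strict Implicit.
Unset Printing Implicit Defensive.
Local Open Scope group_scope.

Section NonSelfNormalizingClasses.
Variable gT : finGroupType.
Implicit Types (A B X Y : {set gT}) (G H : {group gT}).

Lemma nsn_subgroupsP X H :
  reflect [/\ H \subset X, H :!=: 1 & 'N_X(H) != H] (gval H \in nsn_subgroups X).
Proof. by rewrite inE groupP /=; apply: and3P. Qed.

Lemma conjugates_refl A G : A \in A :^: G.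
Proof. exact: (orbit_refl 'Js). Qed.

Lemma eq_conjugates A B G : (A :^: G == B :^: G) = (A \in B :^: G).
Proof. exact: sameP eqP (@orbit_eqP _ _ 'Js _ _ _). Qed.

Lemma conjugates_central A G : A \subset 'C(G) -> A :^: G = [set A].
Proof.
rewrite centsC => cAG; apply/setP=> B; rewrite inE; apply/imsetP/eqP=> [[x Gx ->]|->].
  by apply/normP; apply: (subsetP (cents_norm cAG)).
by exists 1; rewrite ?conjsg1.
Qed.

Lemma calD1_conjugate G A B : calD G = 1%N ->
  A \in nsn_subgroups G -> B \in nsn_subgroups G -> A \in B :^: G.
Proof.
move=> /eqP/cards1P[c ec] nA nB.
have classG Y : Y \in nsn_subgroups G -> Y :^: G = c.
  by move=> nY; apply/set1P; rewrite -ec; apply/imsetP; exists Y.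
by rewrite (classG B nB) -(classG A nA) conjugates_refl.
Qed.

Lemma nsn_subgroups_center G Y : Y \in nsn_subgroups 'Z(G) ->
  [/\ Y \proper 'Z(G), Y :^: 'Z(G) = [set Y] & Y :^: G = [set Y]].
Proof.
rewrite inE => /and4P[_ sYZ _ nY]; have cYG := subset_trans sYZ (subsetIr G 'C(G)).
rewrite !conjugates_central ?(subset_trans sYZ (center_abelian G)) //.
split=> //; rewrite properEneq sYZ andbT.
by apply: contraNneq nY => ->; rewrite (setIidPl (normG _)).
Qed.

Lemma nsn_subgroups_center_sub G : {subset nsn_subgroups 'Z(G) <= nsn_subgroups G}.
Proof.
move=> Y nY; have [pYZ _ _] := nsn_subgroups_center nY.
move: nY; rewrite !inE => /and4P[gY _ ntY _].
rewrite gY ntY (subset_trans (proper_sub pYZ) (center_sub G)) /=.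
rewrite (setIidPl (cents_norm _)); last first.
  by rewrite centsC (subset_trans (proper_sub pYZ) (subsetIr G 'C(G))).
by apply: contraTneq pYZ => <-; rewrite properE center_sub andbF.
Qed.

(* The classes counted by calD 'Z(G) are singletons, and remain classes of
   G disjoint from those of the subgroups in s. *)
Lemma calD_center_add G (s : seq {set gT}) :
  {subset s <= nsn_subgroups G} -> {in s, forall Y, ~~ (Y \proper 'Z(G))} ->
  uniq [seq Y :^: G | Y <- s] -> (calD 'Z(G) + size s <= calD G)%N.
Proof.
move=> nsn_s npZs uniq_s; set Z := 'Z(G).
set S1 := [set Y :^: Z | Y in nsn_subgroups Z].
set S2 := [set:: [seq Y :^: G | Y <- s]].
have sS1 : S1 \subset [set Y :^: G | Y in nsn_subgroups G].
  apply/subsetP=> _ /imsetP[Y nY ->]; have [_ -> <-] := nsn_subgroups_center nY.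
  by apply/imsetP; exists Y => //; apply: nsn_subgroups_center_sub.
have sS2 : S2 \subset [set Y :^: G | Y in nsn_subgroups G].
  apply/subsetP=> D; rewrite inE => /mapP[Y sY ->].
  by apply/imsetP; exists Y => //; apply: nsn_s.
have dS12 : [disjoint S1 & S2].
  rewrite -setI_eq0; apply/set0Pn=> -[C]; rewrite !inE.
  case/andP=> /imsetP[W nW ->] /mapP[Y sY]; have [pWZ -> _] := nsn_subgroups_center nW.
  move=> eWY; have : Y \in [set W] by rewrite eWY conjugates_refl.
  by rewrite inE => /eqP eYW; case/negP: (npZs Y sY); rewrite eYW pWZ.
have cS2 : #|S2| = size s by rewrite cardsE (card_uniqP uniq_s) size_map.
have cS12 : #|S1 :|: S2| = (#|S1| + #|S2|)%N.
  by apply/eqP; rewrite (leq_card_setU S1 S2).2.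
by rewrite /calD -/S1 -cS2 -cS12 subset_leq_card // subUset sS1.
Qed.
End NonSelfNormalizingClasses.

Section CenterQuotient.
Variables (gT : finGroupType) (G : {group gT}).
Local Notation Z := 'Z(G).

Lemma center_normal_sub (Y : {group gT}) : Z \subset Y -> Y \subset G -> Z <| Y.
Proof. by move=> sZY sYG; apply: normalS sZY sYG (center_normal G). Qed.

Lemma quotient_center_nsn (Y : {group gT}) :
  Z \proper Y -> gval Y \in nsn_subgroups G -> gval (Y / Z) \in nsn_subgroups (G / Z).
Proof.
move=> pZY /nsn_subgroupsP[sYG _ nN]; have sZY := proper_sub pZY.
apply/nsn_subgroupsP; rewrite quotientS //= quotient_neq1 ?center_normal_sub //.
split=> //; rewrite -quotient_subnormG ?center_normal_sub //.
apply: contra nN => /eqP eNY; apply/eqP; apply: quotient_inj eNY; last first.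
  exact: center_normal_sub.
apply: center_normal_sub; last exact: subsetIl.
by rewrite subsetI (subset_trans sZY sYG) (subset_trans sZY (normG _)).
Qed.

Lemma calD1_quotient_center_conjugate (Y1 Y2 : {group gT}) : calD (G / Z) = 1%N ->
  Z \proper Y1 -> gval Y1 \in nsn_subgroups G ->
  Z \proper Y2 -> gval Y2 \in nsn_subgroups G -> gval Y1 \in Y2 :^: G.
Proof.
move=> D1 pZY1 nY1 pZY2 nY2.
have /imsetP[_ /morphimP[x Nx Gx ->] eY] :=
  calD1_conjugate D1 (quotient_center_nsn pZY1 nY1) (quotient_center_nsn pZY2 nY2).
apply/imsetP; exists x => //; rewrite -quotientJ // in eY.
have [sY1G _ _] := nsn_subgroupsP _ _ nY1; have [sY2G _ _] := nsn_subgroupsP _ _ nY2.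
apply: (quotient_inj _ _ eY); first exact: center_normal_sub (proper_sub pZY1) sY1G.
apply: (@center_normal_sub (Y2 :^ x)%G); last by rewrite /= -(conjGid Gx) conjSg.
by rewrite /= -(normP Nx) conjSg proper_sub.
Qed.

Lemma calD1_quotient_center_exists : calD (G / Z) = 1%N ->
  exists2 Y : {group gT}, Z \proper Y & gval Y \in nsn_subgroups G.
Proof.
rewrite /calD => D1; have : [set C :^: (G / Z) | C in nsn_subgroups (G / Z)] != set0.
  by rewrite -card_gt0 D1.
case/set0Pn=> _ /imsetP[C nC _]; have gC : group_set C by move: nC; rewrite inE => /andP[].
have [sCG ntC nNC] := nsn_subgroupsP _ (Group gC) nC.
pose Y := (coset Z @*^-1 Group gC)%G.
have eYC : Y / Z = Group gC by rewrite cosetpreK.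
have sYG : Y \subset G by rewrite sub_cosetpre_quo // center_normal.
have nZY : Z <| Y := center_normal_sub (sub_cosetpre _) sYG.
exists Y.
  rewrite properEneq sub_cosetpre andbT.
  by apply: contraNneq ntC => eZY; rewrite -eYC -eZY trivg_quotient.
apply/nsn_subgroupsP; split=> //.
  by apply: contraNneq ntC => Y1; rewrite -eYC Y1 quotient1.
by apply: contra nNC => /eqP e; rewrite -eYC -quotient_subnormG // e.
Qed.
End CenterQuotient.

Section PrimeSelfNormalizing.
Variables (gT : finGroupType) (X P : {group gT}).
Hypotheses (prP : prime #|P|) (sPX : P \subset X) (nPX : 'N_X(P) = P).

Lemma order_prime_group_elt a : a \in P -> a != 1 -> #[a] = #|P|.
Proof.
move=> Pa nta; have /primeP[_ dvdP] := prP.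
case/orP: (dvdP _ (order_dvdG Pa)) => /eqP // a1.
by move/eqP: a1; rewrite order_eq1 (negbTE nta).
Qed.

Lemma normedTI_prime_self_normalizing : normedTI P^# X P.
Proof.
have ntP : P :!=: 1 by rewrite -cardG_gt1 prime_gt1.
apply/normedTI_P; split.
- by have [a Pa nta] := trivgPn _ ntP; apply/set0Pn; exists a; rewrite !inE nta.
- by rewrite subsetI sPX normD1 normG.
move=> g Xg /pred0Pn[a /andP[/= Pa Pga]].
rewrite conjD1g in Pga; move: Pa Pga; rewrite !inE => /andP[nta Pa] /andP[_ Pga].
have sPPg : P \subset P :^ g.
  apply: contraR nta => nsub.
  have : a \in P :&: (P :^ g)%G by rewrite inE Pa.
  by rewrite (prime_TIg prP nsub) => /set1P ->.
have ePg : P :^ g = P by apply/eqP; rewrite eq_sym eqEcard sPPg cardJg leqnn.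
by rewrite -nPX inE Xg; apply/normP.
Qed.

(* The conjugates of P^# fill |X : P| * (|P| - 1) = |X| - |Q| elements of
   order |P|, so every conjugate of Q lies in the remaining |Q| elements. *)
Lemma prime_self_normalizing_complement_normal (Q : {group gT}) :
  Q \subset X -> #|X| = (#|P| * #|Q|)%N -> coprime #|P| #|Q| -> Q <| X.
Proof.
move=> sQX cardX copPQ.
have cs_size := card_support_normedTI normedTI_prime_self_normalizing.
set cs := class_support _ _ in cs_size.
have order_cs y : y \in cs -> #[y] = #|P|.
  case/imset2P=> a x Pa _ ->; rewrite orderJ; move: Pa; rewrite !inE => /andP[nta Pa].
  exact: order_prime_group_elt.
have QJ_cs y g : y \in Q :^ g -> y \notin cs.
  move=> Qgy; apply/negP=> /order_cs oy.
  have : #[y] %| #|Q| by rewrite -(cardJg Q g) order_dvdG.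
  move/coprime_dvdr/(_ copPQ); rewrite oy /coprime gcdnn => /eqP P1.
  by move: prP; rewrite P1.
have sCSX : cs \subset X.
  apply/subsetP=> _ /imset2P[a x Pa Xx ->]; rewrite groupJ // (subsetP sPX) //.
  by move: Pa; rewrite inE => /andP[].
have eX : cs :|: Q = X.
  apply/eqP; rewrite eqEcard subUset sCSX sQX cardsU.
  have -> : cs :&: Q = set0.
    apply/setP=> y; rewrite !inE; apply/negP=> /andP[ycs yQ].
    by have := QJ_cs y 1; rewrite conjsg1 yQ ycs => /(_ isT).
  have iP : #|X : P| = #|Q|.
    by apply/eqP; rewrite -(eqn_pmul2l (prime_gt0 prP)) -cardX Lagrange.
  by rewrite cards0 subn0 cs_size cardX iP (cardsD1 1 P) group1 add1n mulSn addnC /=.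
rewrite /normal sQX; apply/subsetP=> g Xg; apply/normP/eqP.
rewrite eqEcard cardJg leqnn andbT; apply/subsetP=> y Qgy.
have : y \in X by rewrite -(conjGid Xg) mem_conjg (subsetP sQX) // -mem_conjg.
by rewrite -eX inE (negbTE (QJ_cs y g Qgy)).
Qed.
End PrimeSelfNormalizing.

Lemma pnat_coprime_1 (p q n : nat) : p != q -> p.-nat n -> q.-nat n -> n = 1%N.
Proof.
by move=> npq pn qn; apply: (pnat_1 pn); apply: (pi_pnat qn); rewrite !inE eq_sym.
Qed.

(* Two distinct maximal subgroups of a noncyclic p-group are normal and
   nontrivial, hence lie in two distinct conjugacy classes. *)
Lemma pgroup_calD1_cyclic (gT : finGroupType) (p : nat) (P : {group gT}) :
  p.-group P -> calD P = 1%N -> cyclic P.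
Proof.
move=> pP D1; have [//|ncP] := boolP (cyclic P).
have ntP : P :!=: 1 by apply: contraNneq ncP => ->; exact: cyclic1.
have [p_pr _ _] := pgroup_pdiv pP ntP.
pose maxP (M : {group gT}) := maximal M P.
have nsnM M : maxP M -> gval M \in nsn_subgroups P.
  move=> maxM; have nMP := p_maximal_normal pP maxM.
  apply/nsn_subgroupsP; split; first exact: proper_sub (maxgroupp maxM).
    apply: contraNneq ncP => M1; have := p_maximal_index pP maxM.
    by rewrite M1 indexg1 => cP; apply: prime_cyclic; rewrite cP.
  rewrite (setIidPl (normal_norm nMP)); apply: contraTneq (maxgroupp maxM) => ->.
  by rewrite properxx.
have [M1 maxM1 _] := maxgroup_exists (etrans (proper1G P) ntP)
  (gP := [pred M : {group gT} | M \proper P]).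
have [x Px nM1x] : exists2 x, x \in P & x \notin M1.
  by apply/subsetPn; rewrite (proper_subn (maxgroupp maxM1)).
have pxP : <[x]> \proper P.
  rewrite properEneq cycle_subG Px andbT; apply: contraNneq ncP => <-; exact: cycle_cyclic.
have [M2 maxM2 sxM2] := maxgroup_exists pxP (gP := [pred M : {group gT} | M \proper P]).
have /imsetP[g Pg eM12] := calD1_conjugate D1 (nsnM _ maxM1) (nsnM _ maxM2).
rewrite (normP (subsetP (normal_norm (p_maximal_normal pP maxM2)) g Pg)) in eM12.
by case/negP: nM1x; rewrite eM12 -cycle_subG.
Qed.

Section ElementsOutside.
Variable gT : finGroupType.

Lemma exists_pelt_outside_normal (G H : {group gT}) t : H <| G -> prime t ->
  t %| #|G : H| -> exists2 g, g \in G & (g \notin H) && t.-elt g.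
Proof.
move=> nHG t_pr; rewrite -card_quotient ?normal_norm // => /(Cauchy t_pr)[xb].
case/morphimP=> x Nx Gx -> oxb; exists x.`_t; first by rewrite groupX.
rewrite p_elt_constt andbT; apply/negP=> Hxt.
have : coset H x.`_t = 1 by apply: coset_id.
rewrite (morph_constt (coset_morphism H)) //= constt_p_elt; last first.
  by rewrite /p_elt oxb pnat_id.
by move/eqP; rewrite -order_eq1 oxb => /eqP t1; rewrite t1 in t_pr.
Qed.

Lemma exists_minimal_cycle_outside (A : {set gT}) g : g \notin A ->
  exists g0, [/\ g0 \in <[g]>, g0 \notin A &
                 {in <[g0]>, forall h, h \notin A -> <[h]> = <[g0]>}].
Proof.
move=> Ag; pose P n := [exists h in <[g]>, (h \notin A) && (#[h] == n)].
have exP : exists n, P n.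
  by exists #[g]; apply/exists_inP; exists g; rewrite ?cycle_id ?Ag ?eqxx.
case: (ex_minnP exP) => n /exists_inP[g0 g0g /andP[Ag0 /eqP og0]] min_n.
exists g0; split=> // h hg0 Ah; have shg0 : <[h]> \subset <[g0]> by rewrite cycle_subG.
apply/eqP; rewrite eqEcard shg0 /= -/(order h) -/(order g0) og0.
apply: min_n; apply/exists_inP; exists h; rewrite ?Ah ?eqxx //.
by apply: subsetP hg0; rewrite cycle_subG.
Qed.

Lemma exists_minimal_pelt_outside_normal (G H : {group gT}) t : H <| G -> prime t ->
  t %| #|G : H| -> exists g, [/\ g \in G, g \notin H, t.-elt g &
                     {in <[g]>, forall h, h \notin H -> <[h]> = <[g]>}].
Proof.
move=> nHG t_pr tHG; have [g Gg /andP[Hg tg]] := exists_pelt_outside_normal nHG t_pr tHG.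
have [g0 [g0g Hg0 min_g0]] := exists_minimal_cycle_outside Hg.
exists g0; split=> //; first by apply: subsetP g0g; rewrite cycle_subG.
exact: mem_p_elt tg g0g.
Qed.
End ElementsOutside.

Section CalDConditions.
Variables (gT : finGroupType) (G : {group gT}).
Hypothesis calD_G : calD G = (calD 'Z(G) + 3)%N.
Hypothesis calD_GZ : calD (G / 'Z(G)) = 1%N.
Local Notation Z := 'Z(G).

Definition Z_incomparable (Y : {set gT}) :=
  [&& Y != 1, ~~ (Y \subset Z) & ~~ (Z \subset Y)].

Lemma centerJ x : x \in G -> Z :^ x = Z.
Proof. by move=> Gx; apply/normP; apply: (subsetP (normal_norm (center_normal G))). Qed.

Lemma mem_conjugates_center_sub (A B : {set gT}) :
  A \in B :^: G -> (Z \subset A) = (Z \subset B).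
Proof. by case/imsetP=> x Gx ->; rewrite -{1}(centerJ Gx) conjSg. Qed.

Lemma nonabelian_G : ~~ abelian G.
Proof.
apply/negP=> /center_idP eZ.
have [Y pZY /nsn_subgroupsP[sYG _ _]] := calD1_quotient_center_exists calD_GZ.
by move: (proper_subn pZY); rewrite eZ sYG.
Qed.

Lemma center_neq1 : Z :!=: 1.
Proof.
apply/negP=> /eqP Z1; have [Yc pZYc nYc] := calD1_quotient_center_exists calD_GZ.
have : (calD G <= 1)%N.
  rewrite /calD -(cards1 (gval Yc :^: G)) subset_leq_card //.
  apply/subsetP=> _ /imsetP[Y nY ->].
  have /and4P[gY _ ntY _] : [&& group_set Y, Y \subset G, Y != 1 & 'N_G(Y) != Y].
    by move: nY; rewrite inE.
  have pZY : Z \proper Group gY by rewrite Z1 proper1G.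
  have /imsetP[x Gx /= ->] := calD1_quotient_center_conjugate calD_GZ pZY nY pZYc nYc.
  by rewrite conjugates_conj lcoset_id // inE.
by rewrite calD_G addn3.
Qed.

Lemma nsn_center : gval Z \in nsn_subgroups G.
Proof.
apply/nsn_subgroupsP; rewrite center_sub center_neq1.
rewrite (setIidPl (normal_norm (center_normal G))).
by split=> //; apply: contra nonabelian_G => /eqP ->; apply: center_abelian.
Qed.

Lemma Z_incomparable_nsn (Y : {group gT}) :
  Y \subset G -> Z_incomparable Y -> gval Y \in nsn_subgroups G.
Proof.
move=> sYG /and3P[ntY _ nZY]; apply/nsn_subgroupsP; split=> //.
apply: contra nZY => /eqP eN; rewrite -eN subsetI center_sub /=.
by apply: cents_norm; apply: subset_trans (subsetIr G 'C(G)) (centS sYG).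
Qed.

(* Otherwise 'Z(G), a non-self-normalizing overgroup of 'Z(G), Y1 and Y2 would
   give four classes beyond those counted by calD 'Z(G). *)
Lemma Z_incomparable_conjugate (Y1 Y2 : {group gT}) : Y1 \subset G -> Y2 \subset G ->
  Z_incomparable Y1 -> Z_incomparable Y2 -> gval Y1 \in Y2 :^: G.
Proof.
move=> sY1G sY2G iY1 iY2; have [//|nY12] := boolP (gval Y1 \in Y2 :^: G).
have [Yc pZYc nYc] := calD1_quotient_center_exists calD_GZ.
have /and3P[_ nY1Z nZY1] := iY1; have /and3P[_ nY2Z nZY2] := iY2.
suff: (calD Z + size [:: gval Z; gval Yc; gval Y1; gval Y2] <= calD G)%N.
  by rewrite calD_G leq_add2l.
apply: calD_center_add => [Y|Y|].
- by rewrite !in_cons in_nil orbF => /or4P[] /eqP->;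
    rewrite ?nsn_center ?(Z_incomparable_nsn sY1G iY1) ?(Z_incomparable_nsn sY2G iY2).
- rewrite !in_cons in_nil orbF => /or4P[] /eqP->; rewrite ?properxx //; last 2 first.
  + by apply: contra nY1Z; apply: proper_sub.
  + by apply: contra nY2Z; apply: proper_sub.
  by apply: contraTN pZYc => /proper_sub sYcZ; rewrite properE sYcZ andbF.
rewrite /= !in_cons in_nil !orbF !negb_or !eq_conjugates nY12 !andbT.
have notJ (A : {set gT}) (Y : {group gT}) :
    Z \subset A -> ~~ (Z \subset Y) -> A \notin Y :^: G.
  by move=> sZA nZY; apply: contra nZY => /mem_conjugates_center_sub <-.
have [sZZ sZYc] := (subxx Z, proper_sub pZYc).
rewrite !(notJ _ Y1) ?(notJ _ Y2) // !andbT.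
by apply/imsetP=> -[x _ eZ]; have := proper_card pZYc; rewrite eZ cardJg ltnn.
Qed.

Lemma card_Z_incomparable (Y1 Y2 : {group gT}) : Y1 \subset G -> Y2 \subset G ->
  Z_incomparable Y1 -> Z_incomparable Y2 -> #|Y1| = #|Y2|.
Proof.
move=> sY1G sY2G iY1 iY2.
by have /imsetP[x _ ->] := Z_incomparable_conjugate sY1G sY2G iY1 iY2; rewrite cardJg.
Qed.

Lemma nsn_overcenter (Y : {group gT}) :
  Z \proper Y -> Y \subset G -> 'N_G(Y) != Y -> gval Y \in nsn_subgroups G.
Proof.
move=> pZY sYG nY; apply/nsn_subgroupsP; split=> //.
by rewrite -proper1G (proper_trans _ pZY) // proper1G center_neq1.
Qed.

Lemma card_nsn_overcenter (Y1 Y2 : {group gT}) :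
  Z \proper Y1 -> Y1 \subset G -> 'N_G(Y1) != Y1 ->
  Z \proper Y2 -> Y2 \subset G -> 'N_G(Y2) != Y2 -> #|Y1| = #|Y2|.
Proof.
move=> pZY1 sY1G nY1 pZY2 sY2G nY2.
have /imsetP[x _ ->] := calD1_quotient_center_conjugate calD_GZ
  pZY1 (nsn_overcenter pZY1 sY1G nY1) pZY2 (nsn_overcenter pZY2 sY2G nY2).
exact: cardJg.
Qed.

Lemma two_prime_divisors_index_center :
  exists t1 t2, [/\ prime t1, prime t2, t1 != t2, t1 %| #|G : Z| & t2 %| #|G : Z|].
Proof.
set n := #|G : Z|; have n_gt1 : 1 < n.
  rewrite indexg_gt1; apply: contra nonabelian_G => sGZ.
  exact: abelianS sGZ (center_abelian G).
have t1_pr := pdiv_prime n_gt1; set t1 := pdiv n in t1_pr.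
have : ~~ t1.-nat n.
  apply: contra nonabelian_G => t1n; apply: cyclic_center_factor_abelian.
  apply: (pgroup_calD1_cyclic (p := t1)) calD_GZ.
  by rewrite /pgroup card_quotient ?normal_norm ?center_normal.
rewrite /pnat ltnW //= => /allPn[t2 t2n nt12]; move: t2n; rewrite mem_primes.
case/and3P=> t2_pr _ t2_dvd; exists t1, t2; split; rewrite ?pdiv_dvd //.
by apply: contraNneq nt12 => ->; rewrite inE.
Qed.

Lemma exists_Z_incomparable_and_overcenter_elts : exists p q y w,
  [/\ [/\ prime p, prime q & p != q],
      [/\ y \in G, p.-elt y, Z_incomparable <[y]> &
          {in <[y]>, forall h, h \notin Z -> <[h]> = <[y]>}] &
      [/\ w \in G, w \notin Z, q.-elt w & Z \subset <[w]>]].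
Proof.
have [t1 [t2 [t1_pr t2_pr nt12 t1G t2G]]] := two_prime_divisors_index_center.
have nZG := center_normal G.
have [g1 [Gg1 Zg1 t1g1 min_g1]] := exists_minimal_pelt_outside_normal nZG t1_pr t1G.
have [g2 [Gg2 Zg2 t2g2 min_g2]] := exists_minimal_pelt_outside_normal nZG t2_pr t2G.
have incZ g : g \notin Z -> ~~ (Z \subset <[g]>) -> Z_incomparable <[g]>.
  move=> Zg nZg; rewrite /Z_incomparable cycle_eq1 nZg cycle_subG Zg !andbT.
  by apply: contraNneq Zg => ->; rewrite group1.
have [sZg1 | nZg1] := boolP (Z \subset <[g1]>); have [sZg2 | nZg2] := boolP (Z \subset <[g2]>).
- case/negP: center_neq1; rewrite trivg_card1; apply/eqP; apply: (pnat_coprime_1 nt12).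
    exact: pgroupS sZg1 t1g1.
  exact: pgroupS sZg2 t2g2.
- by exists t2, t1, g2, g1; rewrite eq_sym incZ.
- by exists t1, t2, g1, g2; rewrite incZ.
have := card_Z_incomparable _ _ (incZ _ Zg1 nZg1) (incZ _ Zg2 nZg2).
rewrite !cycle_subG => /(_ Gg1 Gg2) og12.
have : #[g1] = 1%N by apply: (pnat_coprime_1 nt12); rewrite // /order og12.
by move/eqP; rewrite order_eq1 => /eqP g1_1; rewrite g1_1 group1 in Zg1.
Qed.

Section Witnesses.
Variables (p q : nat) (y w : gT).
Hypotheses (p_pr : prime p) (q_pr : prime q) (npq : p != q).
Hypotheses (Gy : y \in G) (py : p.-elt y) (incK : Z_incomparable <[y]>)
  (min_y : {in <[y]>, forall h, h \notin Z -> <[h]> = <[y]>}).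
Hypotheses (Gw : w \in G) (Zw : w \notin Z) (qw : q.-elt w) (sZw : Z \subset <[w]>).
Local Notation K := <[y]>%G.

Lemma qgroup_center : q.-group Z.
Proof. exact: pgroupS sZw qw. Qed.

Lemma sub_K_G : K \subset G.
Proof. by rewrite cycle_subG. Qed.

Lemma y_notin_center : y \notin Z.
Proof. by case/and3P: incK; rewrite cycle_subG. Qed.

(* y ^+ p is either outside Z, contradicting the minimality of y, or a
   p-element of the q-group Z. *)
Lemma order_y : #[y] = p.
Proof.
have nty : <[y]> != 1 :> {set gT} by case/and3P: incK.
have p_dvd_y : p %| #[y] by have [] := pgroup_pdiv (py : p.-group <[y]>) nty.
have oyp := orderXdiv p_dvd_y.
have [Zyp | Zyp] := boolP (y ^+ p \in Z); last first.
  have := min_y (mem_cycle y p) Zyp => /(congr1 (fun A : {set gT} => #|A|)).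
  rewrite -/(order (y ^+ p)) -/(order y) oyp => eyp.
  by have := ltn_Pdiv (prime_gt1 p_pr) (order_gt0 y); rewrite eyp ltnn.
have o_yp : #[y ^+ p] = 1%N.
  by apply: (pnat_coprime_1 npq); [apply: p_eltX | apply: mem_p_elt qgroup_center Zyp].
by rewrite -(divnK p_dvd_y) -oyp o_yp mul1n.
Qed.

Lemma card_K : #|K| = p.
Proof. exact: order_y. Qed.

Lemma coprime_pq : coprime p q.
Proof. by rewrite prime_coprime // dvdn_prime2. Qed.

(* For z in Z of order q, the cyclic group <[y * z]> of order p * q is not
   Z-incomparable, so it contains Z. *)
Lemma card_center : #|Z| = q.
Proof.
have [_ q_dvd_Z _] := pgroup_pdiv qgroup_center center_neq1.
have [z Zz oz] := Cauchy q_pr q_dvd_Z.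
have cyz : commute y z by apply: commute_sym; apply: (centP (subsetP (subsetIr G _) z Zz)).
have eW : <[y * z]> = <[y]> * <[z]> by rewrite cycleM // order_y oz coprime_pq.
have cW : #|<[y * z]>| = (p * q)%N.
  by rewrite eW TI_cardMg ?coprime_TIg -/(order y) -/(order z) ?order_y ?oz ?coprime_pq.
have sZW : Z \subset <[y * z]>.
  apply/idPn=> nZW; have sWG : <[y * z]> \subset G.
    by rewrite cycle_subG groupM // (subsetP (center_sub G)).
  have incW : Z_incomparable <[y * z]>.
    rewrite /Z_incomparable nZW andbT -cardG_gt1 cW.
    rewrite (ltn_trans (prime_gt1 p_pr)) ?ltn_Pmulr ?prime_gt0 ?prime_gt1 //=.
    apply: contraNN y_notin_center => sWZ; apply: (subsetP sWZ).
    by rewrite eW -{1}(mulg1 y) mem_mulg ?cycle_id ?group1.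
  have := card_Z_incomparable sWG sub_K_G incW incK.
  rewrite cW -/(order y) order_y => epq.
  by have := ltn_Pmulr (prime_gt1 q_pr) (prime_gt0 p_pr); rewrite epq ltnn.
have [_ _ [m cZ]] := pgroup_pdiv qgroup_center center_neq1.
have copZp : coprime #|Z| p by rewrite cZ coprime_pexpl // coprime_sym coprime_pq.
have := cardSg sZW; rewrite cW (Gauss_dvdr _ copZp) => Z_dvd_q.
have /primeP[_ dvd_q] := q_pr; case/orP: (dvd_q _ Z_dvd_q) => /eqP // Z1.
by case/negP: center_neq1; rewrite trivg_card1 Z1.
Qed.

Lemma sylow_K : p.-Sylow(G) K.
Proof.
have [P sylP sKP] := Sylow_superset sub_K_G py.
have [sPG pP] := (pHall_sub sylP, pHall_pgroup sylP).
have incP : Z_incomparable P.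
  case/and3P: incK => ntK nKZ _; apply/and3P; split.
  - by apply: contraNneq ntK => P1; apply/eqP/trivgP; rewrite -P1.
  - by apply: contra nKZ; apply: subset_trans.
  apply/negP=> sZP; case/negP: center_neq1; rewrite trivg_card1; apply/eqP.
  exact: (pnat_coprime_1 npq (pgroupS sZP pP) qgroup_center).
have -> : K = P.
  by apply/val_inj/eqP; rewrite eqEcard sKP (card_Z_incomparable sPG sub_K_G incP incK) /=.
exact: sylP.
Qed.

Lemma prime_dvd_G r : prime r -> r %| #|G| -> r = p \/ r = q.
Proof.
move=> r_pr r_dvd_G; have [g Gg og] := Cauchy r_pr r_dvd_G.
have [-> | nrq] := eqVneq r q; [by right | left].
have r_ndvd_q : ~~ (r %| q) by rewrite dvdn_prime2 // (negbTE nrq).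
have incg : Z_incomparable <[g]>.
  rewrite /Z_incomparable cycle_eq1 cycle_subG -order_eq1 og gtn_eqF ?prime_gt1 //=.
  apply/andP; split.
    by apply: contra r_ndvd_q; rewrite -card_center -og; apply: order_dvdG.
  have q_ndvd_r : ~~ (q %| r) by rewrite dvdn_prime2 // eq_sym.
  by apply: contra q_ndvd_r; rewrite -card_center -og; apply: cardSg.
have := card_Z_incomparable _ sub_K_G incg incK; rewrite cycle_subG -/(order g).
by rewrite og -/(order y) order_y => ->.
Qed.

(* Every nontrivial subgroup of Q contains Z: otherwise it would be
   Z-incomparable, hence of order p. *)
Lemma exists_sylow_overcenter : exists Q : {group gT}, [/\ q.-Sylow(G) Q, Z \proper Q &
  forall W : {group gT}, W \subset Q -> W :!=: 1 -> Z \subset W].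
Proof.
have swG : <[w]> \subset G by rewrite cycle_subG.
have [Q sylQ swQ] := Sylow_superset swG qw.
have [sQG qQ] := (pHall_sub sylQ, pHall_pgroup sylQ).
exists Q; split=> //.
  rewrite properEneq (subset_trans sZw swQ) andbT.
  by apply: contraNneq Zw => ->; apply: (subsetP swQ _ (cycle_id w)).
move=> W sWQ ntW; apply/idPn=> nZW.
have nWZ : ~~ (W \subset Z).
  apply: contra nZW => sWZ; have /primeP[_ dvd_q] := q_pr.
  case/orP: (dvd_q _ (etrans (congr1 _ (esym card_center)) (cardSg sWZ))) => /eqP cW.
    by case/negP: ntW; rewrite trivg_card1 cW.
  suff -> : W :=: Z by [].
  by apply/eqP; rewrite eqEcard sWZ card_center cW leqnn.
have := card_Z_incomparable (subset_trans sWQ sQG) sub_K_G _ incK.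
rewrite /Z_incomparable ntW nWZ nZW -/(order y) order_y => /(_ isT) cW.
have : q.-nat p by rewrite -cW; apply: pgroupS sWQ qQ.
by rewrite pnatE // inE (negbTE npq).
Qed.

Lemma card_G (Q : {group gT}) : q.-Sylow(G) Q -> #|G| = (p * #|Q|)%N.
Proof.
move=> sylQ; rewrite -(partnC p (cardG_gt0 G)) -(card_Hall sylow_K) card_K.
rewrite (card_Hall sylQ); congr (_ * _)%N; apply: eq_in_partn => r.
rewrite mem_primes !inE => /and3P[r_pr _ r_dvd_G].
by case: (prime_dvd_G r_pr r_dvd_G) => ->; rewrite eqxx ?(negbTE npq) // eq_sym (negbTE npq).
Qed.

Local Notation KZ := (K <*> Z)%G.

Lemma cent_Z_K : Z \subset 'C(K).
Proof. by rewrite (subset_trans (subsetIr G 'C(G))) ?centS ?sub_K_G. Qed.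

Lemma joinKZ : KZ :=: K * Z.
Proof. exact: cent_joinEr cent_Z_K. Qed.

Lemma card_KZ : #|KZ| = (p * q)%N.
Proof.
rewrite joinKZ TI_cardMg /= ?card_K ?card_center //.
by apply: coprime_TIg; rewrite /= card_K card_center coprime_pq.
Qed.

Lemma abelian_KZ : abelian KZ.
Proof. by rewrite joinKZ abelianM cycle_abelian center_abelian /= cent_Z_K. Qed.

Lemma sub_KZ_G : KZ \subset G.
Proof. by rewrite join_subG sub_K_G center_sub. Qed.

Lemma proper_Z_KZ : Z \proper KZ.
Proof.
rewrite properEcard joing_subr card_KZ card_center.
by rewrite ltn_Pmull ?prime_gt1 ?prime_gt0.
Qed.

Section SylowQ.
Variable Q : {group gT}.
Hypotheses (sylQ : q.-Sylow(G) Q) (pZQ : Z \proper Q)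
  (minZQ : forall W : {group gT}, W \subset Q -> W :!=: 1 -> Z \subset W).

Lemma sub_Q_G : Q \subset G. Proof. exact: pHall_sub sylQ. Qed.

Lemma coprime_K_Q : coprime #|K| #|Q|.
Proof.
have ntQ : Q :!=: 1 by rewrite -proper1G (proper_trans _ pZQ) ?proper1G ?center_neq1.
have [_ _ [m ->]] := pgroup_pdiv (pHall_pgroup sylQ) ntQ.
by rewrite card_K coprime_pexpr // coprime_pq.
Qed.

Lemma mulKQ : K * Q = G.
Proof.
apply/eqP; rewrite eqEcard mul_subG ?sub_K_G ?sub_Q_G //=.
rewrite TI_cardMg ?coprime_TIg ?coprime_K_Q //.
by rewrite (card_G sylQ) card_K.
Qed.

Lemma normal_Q_of_self_normalizing_KZ : 'N_G(KZ) = KZ -> Q <| G.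
Proof.
move=> nKZ; have nZG := normal_norm (center_normal G).
have sZQ := proper_sub pZQ; have sZKZ := proper_sub proper_Z_KZ.
have iKZ : #|KZ : Z| = p.
  apply/eqP; rewrite -(eqn_pmul2l (prime_gt0 q_pr)) -{1}card_center Lagrange //.
  by rewrite card_KZ mulnC.
have cardGZ : #|G / Z| = (#|KZ / Z| * #|Q / Z|)%N.
  rewrite !card_quotient ?(subset_trans sub_KZ_G) ?(subset_trans sub_Q_G) // iKZ.
  apply/eqP; rewrite -(eqn_pmul2l (cardG_gt0 'Z(G))) !Lagrange ?center_sub //.
  by rewrite (card_G sylQ) -(Lagrange sZQ) card_center mulnCA.
have nQGZ : Q / Z <| G / Z.
  apply: prime_self_normalizing_complement_normal (quotientS _ sub_Q_G) cardGZ _.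
  - by rewrite card_quotient ?(subset_trans sub_KZ_G) // iKZ.
  - exact: quotientS sub_KZ_G.
  - by rewrite -quotient_subnormG ?center_normal_sub ?sub_KZ_G // nKZ.
  rewrite card_quotient ?(subset_trans sub_KZ_G) // iKZ.
  by rewrite -card_K; apply: coprime_dvdr (dvdn_quotient _ _) coprime_K_Q.
rewrite -(quotientGK (center_normal_sub sZQ sub_Q_G)) -(quotientGK (center_normal G)).
by rewrite cosetpre_normal.
Qed.

Lemma card_sylowQ : #|Q| = (q ^ 2)%N.
Proof.
have qQ := pHall_pgroup sylQ; have cQ := card_pgroup qQ; set k := logn q #|Q| in cQ.
have q_gt1 := prime_gt1 q_pr.
suff k2 : k = 2 by rewrite cQ k2.
have k_gt1 : 1 < k by rewrite -(ltn_exp2l 1 _ q_gt1) -cQ expn1 -card_center proper_card.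
apply/eqP; rewrite eqn_leq k_gt1 andbT leqNgt; apply/negP=> k_gt2.
have [W [sWQ nWQ cW]] := normal_pgroup qQ (normal_refl Q) (ltnW k_gt2 : 2 <= k).
have sWG := subset_trans sWQ sub_Q_G.
have ntW : W :!=: 1 by rewrite -cardG_gt1 cW -{1}(expn0 q) ltn_exp2l.
have pZW : Z \proper W by rewrite properEcard minZQ // card_center cW -{1}(expn1 q) ltn_exp2l.
have nNW : 'N_G(W) != W.
  apply: contraTneq k_gt2 => eNW.
  have : Q \subset W by rewrite -eNW subsetI sub_Q_G normal_norm.
  by move/subset_leq_card; rewrite cW cQ leq_exp2l // leqNgt.
have nKZ : 'N_G(KZ) = KZ.
  apply/eqP; apply/idPn=> nNKZ.
  have := card_nsn_overcenter proper_Z_KZ sub_KZ_G nNKZ pZW sWG nNW.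
  rewrite card_KZ cW mulnC expnS expn1 => /eqP; rewrite eqn_pmul2l ?prime_gt0 //.
  by move/eqP=> epq; move: npq; rewrite epq eqxx.
have nQG := normal_Q_of_self_normalizing_KZ nKZ.
have nNQ : 'N_G(Q) != Q.
  rewrite (setIidPl (normal_norm nQG)); apply/eqP=> eGQ.
  move: (card_G sylQ); rewrite -eGQ -{1}(mul1n #|G|) => /eqP.
  by rewrite eqn_pmul2r ?cardG_gt0 // => /eqP p1; move: p_pr; rewrite -p1.
have := card_nsn_overcenter pZQ sub_Q_G nNQ pZW sWG nNW; rewrite cQ cW => /eqP.
by rewrite eqn_exp2l // => /eqP k2; rewrite k2 ltnn in k_gt2.
Qed.

Lemma abelian_Q : abelian Q.
Proof. exact: card_p2group_abelian q_pr card_sylowQ. Qed.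

(* Coprime action on the abelian group Q: [~: Q, K] meets 'C(K) trivially,
   yet it would contain Z <= 'C(K) if it were nontrivial. *)
Lemma cent_Q_K_of_normal_Q : Q <| G -> Q \subset 'C(K).
Proof.
move=> nQG; have nQK := subset_trans sub_K_G (normal_norm nQG).
have TI_RC := coprime_abel_cent_TI nQK _ abelian_Q.
rewrite coprime_sym coprime_K_Q in TI_RC.
apply/commG1P/eqP; apply/idPn=> ntR.
have sZR : Z \subset [~: Q, K] by apply: minZQ ntR; rewrite commg_subl.
by case/negP: center_neq1; rewrite -subG1 -(TI_RC isT) subsetI sZR cent_Z_K.
Qed.

Lemma index_KZ : #|G : KZ| = q.
Proof.
apply/eqP; rewrite -(eqn_pmul2l (cardG_gt0 KZ)) Lagrange ?sub_KZ_G //.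
by rewrite card_KZ (card_G sylQ) card_sylowQ mulnA.
Qed.

(* KZ has prime index q, so 'N_G(K), which contains KZ, is KZ or G; in the
   first case KZ is self-normalizing, since K = 'O_p(KZ). *)
Lemma normal_K : K <| G.
Proof.
have [//|nKG] := boolP (K <| G); set N := 'N_G(K).
have sKZN : KZ \subset N.
  by rewrite subsetI sub_KZ_G joinKZ mul_subG ?normG ?cents_norm ?cent_Z_K.
have sNKZ : N \subset KZ.
  rewrite -indexg_eq1; have /primeP[_ dvd_q] := q_pr.
  have := Lagrange_index (subsetIl G _) sKZN; rewrite index_KZ => iGN.
  have : #|N : KZ| %| q by rewrite -iGN dvdn_mull.
  case/dvd_q/orP=> // /eqP iNKZ.
  case/negP: nKG; rewrite /normal sub_K_G; apply: subset_trans (subsetIr G 'N(K)).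
  rewrite -/N -indexg_eq1.
  by move: iGN; rewrite iNKZ -{2}(mul1n q) => /eqP; rewrite eqn_pmul2r ?prime_gt0.
have sKKZ : K \subset KZ := joing_subl _ _.
have OpKZ : 'O_p(KZ) = K.
  apply: normal_Hall_pcore (pHall_subl sKKZ sub_KZ_G sylow_K) _.
  by rewrite -sub_abelian_normal ?abelian_KZ.
have nKZ : 'N_G(KZ) = KZ.
  apply/eqP; rewrite eqEsubset subsetI sub_KZ_G normG !andbT.
  have charK : K \char KZ by rewrite -{1}OpKZ pcore_char.
  apply: subset_trans sNKZ; rewrite subsetI subsetIl /=.
  exact: char_norm_trans charK (subsetIr G 'N(KZ)).
have cQK := cent_Q_K_of_normal_Q (normal_Q_of_self_normalizing_KZ nKZ).
case/negP: nKG; rewrite /normal sub_K_G -mulKQ mul_subG ?normG //.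
by rewrite cents_norm // centsC.
Qed.

Lemma cent_Q_K : 'C_Q(K) = Z.
Proof.
have sZC : Z \subset 'C_Q(K) by rewrite subsetI proper_sub // cent_Z_K.
have := cardSg (subsetIl Q 'C(K)); rewrite card_sylowQ => /(dvdn_pfactor _ _ q_pr)[j].
rewrite leq_eqVlt ltnS leq_eqVlt ltnS leqn0 => /or3P[] /eqP-> cC.
- case/negP: nonabelian_G; rewrite -mulKQ abelianM cycle_abelian abelian_Q /=.
  suff <- : 'C_Q(K) = Q by rewrite subsetIr.
  by apply/eqP; rewrite eqEcard subsetIl cC card_sylowQ /=.
- by apply/eqP; rewrite eq_sym eqEcard sZC cC card_center expn1 /=.
- by have := subset_leq_card sZC; rewrite cC card_center expn0 leqNgt prime_gt1.
Qed.

Lemma cyclic_Q : cyclic Q.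
Proof.
have [x Qx Zx] := subsetPn (proper_subn pZQ).
have sxQ : <[x]> \subset Q by rewrite cycle_subG.
have sZx : Z \subset <[x]>.
  by apply: minZQ sxQ _; rewrite cycle_eq1; apply: contraNneq Zx => ->; rewrite group1.
apply/cyclicP; exists x; apply/eqP; rewrite eq_sym eqEcard sxQ card_sylowQ /=.
have := cardSg sxQ; rewrite card_sylowQ => /(dvdn_pfactor _ _ q_pr)[j].
rewrite leq_eqVlt ltnS leq_eqVlt ltnS leqn0 => /or3P[] /eqP-> cx; rewrite cx //.
- case/negP: Zx; suff <- : <[x]> :=: Z by apply: cycle_id.
  by apply/eqP; rewrite eq_sym eqEcard sZx cx card_center expn1 /=.
- by have := subset_leq_card sZx; rewrite cx card_center expn0 leqNgt prime_gt1.
Qed.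

Lemma q_dvd_pred_p : q %| p.-1.
Proof.
have nKQ : Q \subset 'N(K) := subset_trans sub_Q_G (normal_norm normal_K).
have := cardSg (Aut_conj_aut K Q).
rewrite card_Aut_cyclic ?cycle_cyclic // card_K totient_prime // card_morphim.
rewrite ker_conj_aut (setIidPr nKQ) -indexgI cent_Q_K.
suff -> : #|Q : Z| = q by [].
apply/eqP; rewrite -(eqn_pmul2l (prime_gt0 q_pr)) -{1}card_center Lagrange ?proper_sub //.
by rewrite card_sylowQ mulnn.
Qed.

Lemma semidirect_structure :
  [/\ [/\ prime p, prime q, K <| G & #|K| = p],
      [/\ Q \subset G, cyclic Q, #|Q| = (q ^ 2)%N & q %| p.-1],
      G :=: K * Q, K :&: Q = 1 & 'C_Q(K) = Z /\ #|Z| = q].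
Proof.
split; rewrite ?mulKQ ?cent_Q_K ?coprime_TIg ?coprime_K_Q //.
- by rewrite normal_K card_K.
- by rewrite sub_Q_G cyclic_Q card_sylowQ q_dvd_pred_p.
- by rewrite card_center.
Qed.
End SylowQ.
End Witnesses.
End CalDConditions.

Theorem mainTheorem12 (gT : finGroupType) (G : {group gT}) :
  calD G = (calD 'Z(G) + 3)%N ->
  calD (G / 'Z(G)) = 1%N ->
  exists (K H : {group gT}) (p q : nat),
    [/\ [/\ prime p, prime q, K <| G & #|K| = p],
        [/\ H \subset G, cyclic H, #|H| = (q ^ 2)%N & q %| p.-1],
        G :=: K * H, K :&: H = 1 &
        'C_H(K) = 'Z(G) /\ #|'Z(G)| = q].
Proof.
move=> calD_G calD_GZ.
have [p [q [y [w [[p_pr q_pr npq] [Gy py incK min_y] [Gw Zw qw sZw]]]]]] :=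
  exists_Z_incomparable_and_overcenter_elts calD_G calD_GZ.
have [Q [sylQ pZQ minZQ]] := exists_sylow_overcenter calD_G calD_GZ
  p_pr q_pr npq Gy py incK min_y Gw Zw qw sZw.
exists <[y]>%G, Q, p, q.
exact: (semidirect_structure calD_G calD_GZ
  p_pr q_pr npq Gy py incK min_y qw sZw sylQ pZQ minZQ).
Qed.
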